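(* There exist finite constants $M_{t,j}\ge 0$ ($t\in\mathcal T$, $j=1,2$), depending only on the multilinear program and not on $\hat v$, such that for every indicator vector $\hat v\in\{0,1\}^{\mathcal T}$ of a proper triple set and every optimal solution $(\lambda,\mu)$ of the linear program $\mathrm{D}(\hat v)$ with $\lambda_{t,1}=\lambda_{t,2}=\lambda_{t,3}=0$ for every $t$ with $\hat v_t=0$, we have $\lambda_{t,j}\le M_{t,j}$ for all $t\in\mathcal T$ and $j=1,2$.
   Context: A multilinear program has data $n,m$, coefficients $\alpha_i\in\mathbb{R}$ and nonempty index sets $J_i\subseteq[n]$. Let $\mathcal N=\bigcup_i\{J:\emptyset\ne J\subseteq J_i\}$ and $\beta_J=\sum_{i:J_i=J}\alpha_i$. A triple is $t=(J,J',J'')$ with $J''\in\mathcal N$, $|J''|\ge2$, $J,J'$ nonempty, disjoint, $J\cup J'=J''$, listed with $J,J'$ in lexicographic order; $\mathsf{tail1}(t)=J$, $\mathsf{tail2}(t)=J'$, $\mathsf{head}(t)=J''$; $\mathcal T$ is the set of all triples. A proper triple set is a set $T\subseteq\mathcal T$ containing a subset $T'$ such that (1) every $J_i$ with $|J_i|>1$ is the head of some triple in $T'$, and (2) whenever a set $J$ with $|J|>1$ is the first or second element of a triple in $T'$, $J$ is the head of a different triple in $T'$; its indicator vector has $\hat v_t=1$ iff $t\in T$. $\mathrm{D}(\hat v)$: maximize $-\sum_{t\in\mathcal T}[(1-\hat v_t)(\lambda_{t,1}+\lambda_{t,2})+(2-\hat v_t)\lambda_{t,3}]-\sum_{J\in\mathcal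 N}\mu_J$ over $\lambda\ge0,\mu\ge0$ subject to, for every $J\in\mathcal N$, $\beta_J+\sum_{t:\mathsf{tail1}(t)=J}(-\lambda_{t,1}+\lambda_{t,3})+\sum_{t:\mathsf{tail2}(t)=J}(-\lambda_{t,2}+\lambda_{t,3})+\sum_{t:\mathsf{head}(t)=J}(\lambda_{t,1}+\lambda_{t,2}-\lambda_{t,3})+\mu_J\ge0$. *)

From HB Require Import structures.
From mathcomp Require Import all_boot all_order all_algebra.
From mathcomp Require Import reals.
Set Implicit Arguments. Unset Strict Implicit. Unset Printing Implicit Defensive.
Import Order.TTheory GRing.Theory Num.Theory.
Local Open Scope ring_scope.

(* A multilinear program is given by n, m, alpha : 'I_m -> R and
   index sets Js : 'I_m -> {set 'I_n} (assumed nonempty in the theorem). *)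

Definition T3 (n : nat) : finType := ({set 'I_n} * {set 'I_n} * {set 'I_n})%type.
Definition tail1 n (t : T3 n) : {set 'I_n} := t.1.1.
Definition tail2 n (t : T3 n) : {set 'I_n} := t.1.2.
Definition head  n (t : T3 n) : {set 'I_n} := t.2.

Definition inN n m (Js : 'I_m -> {set 'I_n}) (J : {set 'I_n}) : bool :=
  (J != set0) && [exists i, J \subset Js i].

Definition beta (R : ringType) n m (alpha : 'I_m -> R) (Js : 'I_m -> {set 'I_n})
  (J : {set 'I_n}) : R := \sum_(i | Js i == J) alpha i.

Fixpoint lexlt_seq (s t : seq nat) : bool :=
  match s, t with
  | [::], [::] => false
  | [::], _ :: _ => true
  | _ :: _, [::] => false
  | x :: s', y :: t' => (x < y)%N || ((x == y) && lexlt_seq s' t')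
  end.

Definition lexlt n (J J' : {set 'I_n}) : bool :=
  lexlt_seq (sort leq [seq val x | x <- enum J]) (sort leq [seq val x | x <- enum J']).

Definition is_triple n m (Js : 'I_m -> {set 'I_n}) (t : T3 n) : bool :=
  [&& inN Js (head t), (1 < #|head t|)%N, tail1 t != set0, tail2 t != set0,
      [disjoint tail1 t & tail2 t], tail1 t :|: tail2 t == head t
    & lexlt (tail1 t) (tail2 t)].

Definition proper_triple_set n m (Js : 'I_m -> {set 'I_n}) (T : {set T3 n}) : Prop :=
  (forall t, t \in T -> is_triple Js t) /\
  exists T' : {set T3 n}, T' \subset T /\
    (forall i, (1 < #|Js i|)%N -> exists2 t, t \in T' & head t = Js i) /\
    (forall t, t \in T' -> forall J, (J = tail1 t \/ J = tail2 t) -> (1 < #|J|)%N ->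
        exists2 t', t' \in T' & t' != t /\ head t' = J).

Definition vhat (R : ringType) n (T : {set T3 n}) (t : T3 n) : R := (t \in T)%:R.

(* the dual LP D(vhat): lam t j with j = 0,1,2 standing for lambda_{t,1..3} *)
Section Dual.
Variables (R : realFieldType) (n m : nat) (alpha : 'I_m -> R) (Js : 'I_m -> {set 'I_n}).

Definition j1 : 'I_3 := @Ordinal 3 0 isT.
Definition j2 : 'I_3 := @Ordinal 3 1 isT.
Definition j3 : 'I_3 := @Ordinal 3 2 isT.

Definition D_feasible (lam : T3 n -> 'I_3 -> R) (mu : {set 'I_n} -> R) : Prop :=
  (forall t, is_triple Js t -> forall j, 0 <= lam t j) /\
  (forall J, inN Js J -> 0 <= mu J) /\
  (forall J, inN Js J ->
     0 <= beta alpha Js J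
        + \sum_(t | is_triple Js t && (tail1 t == J)) (- lam t j1 + lam t j3)
        + \sum_(t | is_triple Js t && (tail2 t == J)) (- lam t j2 + lam t j3)
        + \sum_(t | is_triple Js t && (head t == J)) (lam t j1 + lam t j2 - lam t j3)
        + mu J).

Definition D_obj (v : T3 n -> R) (lam : T3 n -> 'I_3 -> R) (mu : {set 'I_n} -> R) : R :=
  - (\sum_(t | is_triple Js t)
        ((1 - v t) * (lam t j1 + lam t j2) + (2 - v t) * lam t j3))
  - \sum_(J | inN Js J) mu J.

Definition D_optimal (v : T3 n -> R) lam mu : Prop :=
  D_feasible lam mu /\
  forall lam' mu', D_feasible lam' mu' -> D_obj v lam' mu' <= D_obj v lam mu.
End Dual.

From Pilot Require Import Defs.
From HB Require Import structures.
From mathcomp Require Import all_boot all_order all_algebra.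
From mathcomp Require Import reals.
From mathcomp Require Import zify ring lra.
Set Implicit Arguments. Unset Strict Implicit. Unset Printing Implicit Defensive.
Import Order.TTheory GRing.Theory Num.Theory.
Local Open Scope ring_scope.

(* Comparing an optimal solution with the feasible point lambda = 0,
   mu_J = max(0, -beta_J) bounds sum_t lambda_{t,3} + sum_J mu_J by a constant C.
   Read as a flow on N, the constraint at J then says that the lambda_{.,1|2}-flow
   leaving J through the tails of triples exceeds the flow entering J as a head by
   at most |beta_J| + 2C.  Weighting the constraint at J by n - |J|, the weights
   telescope along every triple, and each lambda_{t,j} (j = 1,2) ends up with
   coefficient n - |tail_j t| - (n - |head t|) >= 1; since all these terms are
   nonnegative, each of them is at most the weighted sum of the constants. *)

Lemma ler_sum_subcond (R : numDomainType) (I : finType) (P Q : pred I) (F : I -> R) :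
  (forall i, P i -> 0 <= F i) -> \sum_(i | P i && Q i) F i <= \sum_(i | P i) F i.
Proof.
move=> F_ge0; rewrite big_mkcondr /=; apply: ler_sum => i Pi.
by case: ifP => // _; exact: F_ge0.
Qed.

Lemma is_triple_tails n m (Js : 'I_m -> {set 'I_n}) t : is_triple Js t ->
  [/\ inN Js (Defs.head t), inN Js (tail1 t), inN Js (tail2 t),
      (#|tail1 t| < #|Defs.head t|)%N & (#|tail2 t| < #|Defs.head t|)%N].
Proof.
case/and5P => head_N; have /andP[_ /existsP[i sub_head]] := head_N.
move=> _ t1_n0 t2_n0 /and3P[dis /eqP U _].
have sub1 : tail1 t \subset Defs.head t by rewrite -U subsetUl.
have sub2 : tail2 t \subset Defs.head t by rewrite -U subsetUr.
have card_head : #|Defs.head t| = (#|tail1 t| + #|tail2 t|)%N.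
  by rewrite -U cardsU (disjoint_setI0 dis) cards0 subn0.
have sub_inN J : J != set0 -> J \subset Defs.head t -> inN Js J.
  by move=> J_n0 subJ; rewrite /inN J_n0; apply/existsP; exists i; exact: subset_trans sub_head.
split; [by [] | exact: sub_inN | exact: sub_inN | |];
  by rewrite card_head; move: t1_n0 t2_n0; rewrite -!card_gt0; lia.
Qed.

Section Bound.
Variables (R : realFieldType) (n m : nat) (alpha : 'I_m -> R) (Js : 'I_m -> {set 'I_n}).

Local Notation tr := (is_triple Js).
Local Notation b := (beta alpha Js).

Lemma sum_fiberM (g : T3 n -> {set 'I_n}) (w : {set 'I_n} -> R) (F : T3 n -> R) :
  (forall t, tr t -> inN Js (g t)) ->
  \sum_(J | inN Js J) w J * \sum_(t | tr t && (g t == J)) F t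
  = \sum_(t | tr t) w (g t) * F t.
Proof.
move=> gN; rewrite (partition_big g (inN Js)) //=; apply: eq_bigr => J _.
by rewrite mulr_sumr; apply: eq_bigr => t /andP[_ /eqP ->].
Qed.

Definition codim (J : {set 'I_n}) : R := n%:R - #|J|%:R.

Lemma codim_ge0 J : 0 <= codim J.
Proof.
have : #|J|%:R <= n%:R :> R by rewrite ler_nat -[n in (_ <= n)%N]card_ord max_card.
rewrite /codim; lra.
Qed.

Lemma codim_gap (J J' : {set 'I_n}) : (#|J| < #|J'|)%N -> 1 <= codim J - codim J'.
Proof. by rewrite -(ler_nat R) -addn1 natrD /codim; lra. Qed.

Definition beta_negpart J : R := Num.max 0 (- b J).

Definition negpart_mass : R := \sum_(J | inN Js J) beta_negpart J.

Lemma D_feasible_beta_negpart : D_feasible alpha Js (fun _ _ => 0) beta_negpart.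
Proof.
split=> [//|]; split=> [J _|J _]; first by rewrite le_max lexx.
rewrite !big1 => [|t _|t _|t _]; rewrite ?oppr0 ?addr0 ?subr0 //.
by rewrite /beta_negpart; case: (lerP 0 (- b J)) => h; rewrite ?max_r ?max_l; lra.
Qed.

Lemma D_obj_beta_negpart v : D_obj Js v (fun _ _ => 0) beta_negpart = - negpart_mass.
Proof. by rewrite /D_obj big1 ?oppr0 ?sub0r // => t _; rewrite !addr0 !mulr0 addr0. Qed.

Lemma D_obj_le v lam mu : (forall t, v t <= 1) -> D_feasible alpha Js lam mu ->
  D_obj Js v lam mu <= - (\sum_(t | tr t) lam t j3 + \sum_(J | inN Js J) mu J).
Proof.
move=> v_le1 [lam_ge0 _]; rewrite /D_obj.
suff : \sum_(t | tr t) lam t j3 <= \sum_(t | tr t)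
    ((1 - v t) * (lam t j1 + lam t j2) + (2 - v t) * lam t j3) by lra.
apply: ler_sum => t trt; have := v_le1 t.
have := lam_ge0 t trt j1; have := lam_ge0 t trt j2; have := lam_ge0 t trt j3; nra.
Qed.

Lemma D_optimal_lam3_mu_le v lam mu : (forall t, v t <= 1) ->
  D_optimal alpha Js v lam mu ->
  \sum_(t | tr t) lam t j3 + \sum_(J | inN Js J) mu J <= negpart_mass.
Proof.
move=> v_le1 [feas opt]; have := opt _ _ D_feasible_beta_negpart.
rewrite D_obj_beta_negpart; have := D_obj_le v_le1 feas; lra.
Qed.

Section Flow.
Variables (lam : T3 n -> 'I_3 -> R) (mu : {set 'I_n} -> R).

Definition outflow J : R :=
  \sum_(t | tr t && (tail1 t == J)) lam t j1 + \sum_(t | tr t && (tail2 t == J)) lam t j2.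

Definition inflow J : R := \sum_(t | tr t && (Defs.head t == J)) (lam t j1 + lam t j2).

Lemma sum_codim_flow :
  \sum_(J | inN Js J) codim J * (outflow J - inflow J)
  = \sum_(t | tr t) ((codim (tail1 t) - codim (Defs.head t)) * lam t j1
                     + (codim (tail2 t) - codim (Defs.head t)) * lam t j2).
Proof.
under eq_bigr do rewrite mulrBr mulrDr.
rewrite !big_split /= sumrN !sum_fiberM; try by move=> t /is_triple_tails[].
rewrite -sumrN -!big_split /=; apply: eq_bigr => t _; ring.
Qed.

Hypothesis feas : D_feasible alpha Js lam mu.

Lemma flow_excess_le J : inN Js J ->
  outflow J - inflow J <= b J + 2 * \sum_(t | tr t) lam t j3 + mu J.
Proof.
have [lam_ge0 [_ cons]] := feas; move=> /cons.
rewrite !big_split /= !sumrN.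
have lam3_ge0 t : tr t -> 0 <= lam t j3 by move=> trt; exact: lam_ge0.
have := ler_sum_subcond (fun t => tail1 t == J) lam3_ge0.
have := ler_sum_subcond (fun t => tail2 t == J) lam3_ge0.
have : 0 <= \sum_(t | tr t && (Defs.head t == J)) lam t j3.
  by apply: sumr_ge0 => t /andP[/lam3_ge0].
rewrite /outflow /inflow big_split /=; lra.
Qed.

Lemma lam_le_sum_codim_flow t0 : tr t0 ->
  lam t0 j1 <= \sum_(J | inN Js J) codim J * (outflow J - inflow J) /\
  lam t0 j2 <= \sum_(J | inN Js J) codim J * (outflow J - inflow J).
Proof.
have [lam_ge0 _] := feas.
pose term t := (codim (tail1 t) - codim (Defs.head t)) * lam t j1
               + (codim (tail2 t) - codim (Defs.head t)) * lam t j2.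
have term_ge t : tr t -> lam t j1 <= term t /\ lam t j2 <= term t.
  move=> trt; have [_ _ _ /codim_gap g1 /codim_gap g2] := is_triple_tails trt.
  have := lam_ge0 t trt j1; have := lam_ge0 t trt j2; rewrite /term; nra.
move=> tr0; rewrite sum_codim_flow (bigD1 t0) //= -/(term t0).
have : 0 <= \sum_(t | tr t && (t != t0)) term t.
  apply: sumr_ge0 => t /andP[trt _]; have [+ _] := term_ge t trt.
  by apply: le_trans; exact: lam_ge0.
have := term_ge t0 tr0; lra.
Qed.

End Flow.

Definition lam_bound : R := \sum_(J | inN Js J) codim J * (`|b J| + 2 * negpart_mass).

Lemma lam_bound_ge0 : 0 <= lam_bound.
Proof.
have mass_ge0 : 0 <= negpart_mass by apply: sumr_ge0 => J _; rewrite le_max lexx.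
apply: sumr_ge0 => J _; apply: mulr_ge0; first exact: codim_ge0.
by apply: addr_ge0; rewrite ?normr_ge0 ?mulr_ge0.
Qed.

Lemma D_optimal_lam_le v lam mu t : (forall t, v t <= 1) ->
  D_optimal alpha Js v lam mu -> tr t ->
  lam t j1 <= lam_bound /\ lam t j2 <= lam_bound.
Proof.
move=> v_le1 opt trt; have feas := opt.1; have [lam_ge0 [mu_ge0 _]] := feas.
suff flow_le : \sum_(J | inN Js J) codim J * (outflow lam J - inflow lam J) <= lam_bound.
  by have [le1 le2] := lam_le_sum_codim_flow feas trt; split; apply: le_trans flow_le.
apply: ler_sum => J JN; apply: ler_wpM2l; first exact: codim_ge0.
have mass_le := D_optimal_lam3_mu_le v_le1 opt.
have : 0 <= \sum_(t | tr t) lam t j3 by apply: sumr_ge0 => t' trt'; exact: lam_ge0.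
have : mu J <= \sum_(J | inN Js J) mu J.
  by rewrite (bigD1 J) //= lerDl; apply: sumr_ge0 => J' /andP[/mu_ge0].
have := mu_ge0 J JN; have := ler_norm (b J); have := flow_excess_le feas JN; lra.
Qed.

End Bound.

Theorem lemma5 (R : realType) (n m : nat) (alpha : 'I_m -> R)
    (Js : 'I_m -> {set 'I_n}) (HJ : forall i, Js i != set0) :
  exists M1 M2 : T3 n -> R,
    (forall t, 0 <= M1 t /\ 0 <= M2 t) /\
    forall T : {set T3 n}, proper_triple_set Js T ->
    forall (lam : T3 n -> 'I_3 -> R) (mu : {set 'I_n} -> R),
      D_optimal alpha Js (vhat R T) lam mu ->
      (forall t, is_triple Js t -> t \notin T -> forall j, lam t j = 0) ->
      forall t, is_triple Js t -> lam t j1 <= M1 t /\ lam t j2 <= M2 t.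
Proof.
exists (fun _ => lam_bound alpha Js), (fun _ => lam_bound alpha Js).
split=> [t|T _ lam mu opt _ t trt]; first by have := lam_bound_ge0 alpha Js.
apply: (D_optimal_lam_le _ opt trt) => t'.
by rewrite /vhat; case: (t' \in T); rewrite ?mulr1n ?mulr0n ?ler01.
Qed.
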